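(* Let $\Gamma$ be a distance-regular graph with valency $k$ and diameter $3$. Then the second largest eigenvalue $\theta_1$ of $\Gamma$ satisfies $$\theta_1\geq \min\left\{\frac{a_1+\sqrt{a_1^2+4k}}{2},\ a_3\right\}.$$
   Context: A connected graph $\Gamma$ of diameter $D$ is distance-regular if there are integers $b_i,c_i$ ($0\le i\le D$) such that for any two vertices $x,y$ at distance $i$, exactly $c_i$ neighbours of $y$ are at distance $i-1$ from $x$ and exactly $b_i$ neighbours of $y$ are at distance $i+1$ from $x$. Then $\Gamma$ is regular of valency $k=b_0$, and $a_i:=k-b_i-c_i$. The eigenvalues of $\Gamma$ are those of its adjacency matrix; $\Gamma$ has exactly $D+1$ distinct eigenvalues $k=\theta_0>\theta_1>\dots>\theta_D$. *)

From mathcomp Require Import all_boot all_order all_algebra.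
Set Implicit Arguments. Unset Strict Implicit. Unset Printing Implicit Defensive.
Import Order.TTheory GRing.Theory Num.Theory.

Fixpoint ball (T : finType) (e : rel T) (n : nat) (x : T) : {set T} :=
  match n with
  | 0 => [set x]
  | n'.+1 => ball e n' x :|: [set y | [exists z in ball e n' x, e z y]]
  end.

(* graph distance: least n with y in ball e n x (meaningful when connected,
   in which case it is < #|T|) *)
Definition gdist (T : finType) (e : rel T) (x y : T) : nat :=
  find (fun n => y \in ball e n x) (iota 0 #|T|).

Definition distance_regular (T : finType) (e : rel T) (D : nat)
    (b c : nat -> nat) : Prop :=
  symmetric e /\ irreflexive e /\ (forall x y, connect e x y) /\
      (exists x y, gdist e x y = D) /\ (forall x y, gdist e x y <= D) /\
      c 0 = 0 /\
      (forall x y, let i := gdist e x y in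
        #|[set z | e y z && (gdist e x z == i.+1)]| = b i /\
        (0 < i -> #|[set z | e y z && (gdist e x z == i.-1)]| = c i)).

Definition valency (b : nat -> nat) : nat := b 0.
Definition inter_a (b c : nat -> nat) (i : nat) : nat := b 0 - b i - c i.

Local Open Scope ring_scope.

Definition adjmx (R : nzRingType) (T : finType) (e : rel T) : 'M[R]_#|T| :=
  \matrix_(i, j) (e (enum_val i) (enum_val j))%:R.

Definition second_largest_eigenvalue (R : realFieldType) (n : nat)
    (A : 'M[R]_n) (th1 : R) : Prop :=
  [/\ eigenvalue A th1,
      exists th0, eigenvalue A th0 /\ th1 < th0 &
      forall th th', eigenvalue A th -> eigenvalue A th' ->
        th1 < th -> th1 < th' -> th = th'].

From mathcomp Require Import all_boot all_order all_algebra.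
From mathcomp Require Import zify ring lra.
Set Implicit Arguments. Unset Strict Implicit. Unset Printing Implicit Defensive.
Import Order.TTheory GRing.Theory Num.Theory.

(* Write u for the standard sequence of a root x of the intersection quartic
   p(x) = k b1 b2 ((x - a3) u3 - c3 u2); then t |-> u (d(x0, t)) is an
   eigenvector of the adjacency matrix, so every root of p is an eigenvalue.
   Now p(k) = 0 and p(x) = (x - k) Q(x) with Q(k) > 0.  Let r be the positive
   root of x^2 - a1 x - k.  If theta1 < min(r, a3), then p >= 0 at
   m := min(r, a3), so Q(m) <= 0 and Q has a root xi in [m, k): xi and k are
   two distinct eigenvalues above theta1, which is impossible. *)

Lemma card_sum_indicator (T : finType) (A : {set T}) :
  #|A| = \sum_(t : T) (t \in A).
Proof.
by rewrite -sum1_card big_mkcond; apply: eq_bigr => t _; case: (t \in A).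
Qed.

Section GraphDistance.
Variables (T : finType) (e : rel T).
Implicit Types (x y z w t : T).

Lemma gdist_le_ball x y n : y \in ball e n x -> gdist e x y <= n.
Proof.
move=> yn; case: (ltnP n #|T|) => [ltnT | leTn].
  rewrite leqNgt; apply/negP => /(before_find 0).
  by rewrite nth_iota // add0n yn.
by apply: leq_trans (find_size _ _) _; rewrite size_iota.
Qed.

Lemma mem_ball_gdist x y : gdist e x y < #|T| -> y \in ball e (gdist e x y) x.
Proof.
rewrite /gdist => lt_yT.
have has_y : has (fun n => y \in ball e n x) (iota 0 #|T|).
  by rewrite has_find size_iota.
by have := nth_find 0 has_y; rewrite nth_iota ?add0n.
Qed.

Lemma ball_step x y z n : y \in ball e n x -> e y z -> z \in ball e n.+1 x.
Proof.
move=> yn yz; rewrite /= in_setU in_set; apply/orP; right.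
by apply/existsP; exists y; rewrite yn yz.
Qed.

Lemma gdist_le_card x y : gdist e x y <= #|T|.
Proof. by apply: leq_trans (find_size _ _) _; rewrite size_iota. Qed.

Lemma gdist_edge x y z : e y z -> gdist e x z <= (gdist e x y).+1.
Proof.
move=> yz; case: (ltnP (gdist e x y) #|T|) => [lt_yT | leTy].
  exact/gdist_le_ball/(ball_step (mem_ball_gdist lt_yT) yz).
exact: leq_trans (gdist_le_card x z) (leqW leTy).
Qed.

Lemma gdistxx x : gdist e x x = 0.
Proof. by apply/eqP; rewrite -leqn0 gdist_le_ball //= in_set1. Qed.

Lemma gdist_eq0 x y : (gdist e x y == 0) = (y == x).
Proof.
apply/eqP/eqP => [d0 | ->]; last exact: gdistxx.
have := @mem_ball_gdist x y; rewrite d0 /= in_set1 => /(_ _)/eqP; apply.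
by apply/card_gt0P; exists x.
Qed.

Lemma gdist_connect_lt x y : connect e x y -> gdist e x y < #|T|.
Proof.
move/connectP => [p /shortenP[p' p'_path p'_uniq _] ->].
have: last x p' \in ball e (size p') x.
  elim/last_ind: p' p'_path {p'_uniq} => [|p' z IH]; first by rewrite /= in_set1.
  rewrite rcons_path last_rcons size_rcons => /andP[/IH p'z ez].
  exact: ball_step p'z ez.
move/gdist_le_ball/leq_ltn_trans; apply.
by move/card_uniqP: p'_uniq => /= <-; apply: max_card.
Qed.

Lemma gdist_pred x y n :
  connect e x y -> gdist e x y = n.+1 -> exists2 z, e z y & gdist e x z = n.
Proof.
move=> /gdist_connect_lt lt_yT dy; move: (mem_ball_gdist lt_yT).
rewrite dy /= in_setU in_set => /orP[/gdist_le_ball | /existsP[z /andP[zn zy]]].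
  by rewrite dy ltnn.
exists z => //; apply/eqP; rewrite eqn_leq gdist_le_ball //=.
by rewrite -ltnS -dy gdist_edge.
Qed.

Hypotheses (e_sym : symmetric e) (e_irr : irreflexive e).

Lemma gdist_adj x y : e x y -> gdist e x y = 1.
Proof.
move=> xy; have := gdist_edge x xy; rewrite gdistxx.
have : gdist e x y != 0.
  by rewrite gdist_eq0; apply: contraTneq xy => ->; rewrite e_irr.
lia.
Qed.

Definition layer_nbrs x w j : {set T} := [set t | e w t && (gdist e x t == j)].

Lemma nbr_gdist_cases x w t : e w t ->
  (gdist e x t == (gdist e x w).+1) + (gdist e x t == (gdist e x w).-1)
    + (gdist e x t == gdist e x w) = 1.
Proof.
move=> wt; have le_tw := gdist_edge x wt.
have le_wt : gdist e x w <= (gdist e x t).+1 by rewrite gdist_edge // e_sym.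
have not_both0 : ~~ ((gdist e x w == 0) && (gdist e x t == 0)).
  rewrite !gdist_eq0; apply/negP => /andP[/eqP w_x /eqP t_x].
  by rewrite w_x t_x e_irr in wt.
lia.
Qed.

Lemma card_nbrs_layers x w : #|[set t | e w t]| =
  #|layer_nbrs x w (gdist e x w).+1| + #|layer_nbrs x w (gdist e x w).-1|
    + #|layer_nbrs x w (gdist e x w)|.
Proof.
rewrite !card_sum_indicator -!big_split; apply: eq_bigr => t _.
by rewrite !inE; case: (boolP (e w t)) => //= /nbr_gdist_cases ->.
Qed.

Local Open Scope ring_scope.

Lemma sum_nbrs_layers (R : nzRingType) (F : nat -> R) x w :
  \sum_t F (gdist e x t) * (e t w)%:R =
    F (gdist e x w).+1 *+ #|layer_nbrs x w (gdist e x w).+1|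
    + F (gdist e x w).-1 *+ #|layer_nbrs x w (gdist e x w).-1|
    + F (gdist e x w) *+ #|layer_nbrs x w (gdist e x w)|.
Proof.
rewrite !card_sum_indicator -!sumrMnr -!big_split; apply: eq_bigr => t _.
rewrite !inE e_sym; case: (boolP (e w t)) => [/(nbr_gdist_cases x) | _] /=.
  by case: eqP => [->|_]; case: eqP => [->|_]; case: eqP => [->|_] //= _;
    rewrite ?mulr1 ?mulr1n ?mulr0n ?addr0 ?add0r.
by rewrite mulr0 !mulr0n !addr0.
Qed.

End GraphDistance.

Section DistanceRegular.
Variables (T : finType) (e : rel T) (D : nat) (b c : nat -> nat).
Hypothesis drg : distance_regular e D b c.

Let e_sym : symmetric e. Proof. by case: drg. Qed.
Let e_irr : irreflexive e. Proof. by case: drg => _ []. Qed.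
Let e_connect x y : connect e x y. Proof. by case: drg => _ [_ []]. Qed.
Let gdist_le_diam x y : gdist e x y <= D.
Proof. by case: drg => _ [_ [_ [_ []]]]. Qed.

Lemma card_layer_succ x w :
  #|layer_nbrs e x w (gdist e x w).+1| = b (gdist e x w).
Proof. by case: drg => _ [_ [_ [_ [_ [_ /(_ x w) []]]]]]. Qed.

(* For w = x the truncated index 0.-1 = 0 names an empty layer, matching
   c 0 = 0. *)
Lemma card_layer_pred x w :
  #|layer_nbrs e x w (gdist e x w).-1| = c (gdist e x w).
Proof.
case: drg => _ [_ [_ [_ [_ [c0 /(_ x w) [_]]]]]].
case: (posnP (gdist e x w)) => [dw0 _ | dw_gt0]; last exact.
rewrite dw0 c0; apply/eqP; rewrite cards_eq0; apply/eqP/setP => t; rewrite !inE.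
move/eqP: dw0; rewrite !gdist_eq0 => /eqP->.
by apply/negP => /andP[xt /eqP t_x]; rewrite t_x e_irr in xt.
Qed.

Lemma card_nbrs x : #|[set t | e x t]| = b 0.
Proof.
rewrite -(gdistxx e x) -card_layer_succ gdistxx; apply: eq_card => t.
by rewrite !inE; case: (boolP (e x t)) => //= /(gdist_adj e_irr) ->.
Qed.

Lemma card_layer_same x w :
  #|layer_nbrs e x w (gdist e x w)| = inter_a b c (gdist e x w).
Proof.
by rewrite /inter_a -(card_nbrs w) (card_nbrs_layers e_sym e_irr x w)
  card_layer_succ card_layer_pred -addnA addKn addKn.
Qed.

Lemma exists_gdist n : n <= D -> exists x y, gdist e x y = n.
Proof.
move=> le_nD; case: drg => _ [_ [_ [[x [y dxy]] _]]].
have: exists x y, gdist e x y = n + (D - n) by exists x, y; rewrite subnKC.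
elim: (D - n) => [|m IH]; first by rewrite addn0.
move=> [x' [y']]; rewrite addnS => /(gdist_pred (e_connect x' y'))[z _ dz].
by apply: IH; exists x', z.
Qed.

Lemma intersection_le_valency i : i <= D -> b i + c i <= b 0.
Proof.
move=> /exists_gdist[x [w <-]].
by rewrite -(card_nbrs w) (card_nbrs_layers e_sym e_irr x w) card_layer_succ
  card_layer_pred leq_addr.
Qed.

Lemma intersection_b_gt0 i : i < D -> 0 < b i.
Proof.
move=> /exists_gdist[x [y /[dup] dy /(gdist_pred (e_connect x y))[z zy dz]]].
rewrite -dz -card_layer_succ; apply/card_gt0P; exists y.
by rewrite inE zy dz dy eqxx.
Qed.

Lemma intersection_c_gt0 i : 0 < i <= D -> 0 < c i.
Proof.
case: i => [//|i] /exists_gdist[x [y /[dup] dy]].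
move=> /(gdist_pred (e_connect x y))[z zy dz].
rewrite -dy -card_layer_pred; apply/card_gt0P; exists z.
by rewrite inE e_sym zy dz dy eqxx.
Qed.

Lemma intersection_c1 : 0 < D -> c 1 = 1.
Proof.
move=> /exists_gdist[x [y dy]].
have [z zy /eqP] := gdist_pred (e_connect x y) dy; rewrite gdist_eq0 => /eqP z_x.
have := card_layer_pred x y; rewrite dy /= => <-; rewrite -(cards1 x).
apply: eq_card => t; rewrite !inE gdist_eq0.
by case: eqP => [->|_]; rewrite ?andbF // e_sym -z_x zy.
Qed.

Lemma intersection_bD : b D = 0.
Proof.
have [x [y dy]] := exists_gdist (leqnn D).
rewrite -dy -card_layer_succ; apply/eqP; rewrite cards_eq0; apply/eqP/setP => t.
by rewrite !inE dy; case: eqP (gdist_le_diam x t) => [->|]; rewrite ?ltnn ?andbF.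
Qed.

Local Open Scope ring_scope.

Lemma natr_inter_a (R : nzRingType) i : (i <= D)%N ->
  (inter_a b c i)%:R = (b 0)%:R - (b i)%:R - (c i)%:R :> R.
Proof.
move=> /intersection_le_valency le_bc_b0.
by rewrite /inter_a !natrB //; lia.
Qed.

Lemma sum_nbrs_intersection (R : nzRingType) (F : nat -> R) x w :
  let i := gdist e x w in
  \sum_t F (gdist e x t) * (e t w)%:R =
    F i.+1 *+ b i + F i.-1 *+ c i + F i *+ inter_a b c i.
Proof.
by rewrite /= sum_nbrs_layers // card_layer_succ card_layer_pred card_layer_same.
Qed.

Lemma eigenvalue_of_recurrence (R : fieldType) (th : R) (f : nat -> R) :
  f 0 != 0 ->
  (forall i, (i <= D)%N ->
     f i.+1 * (b i)%:R + f i.-1 * (c i)%:R + f i * (inter_a b c i)%:R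
       = th * f i) ->
  eigenvalue (adjmx R e) th.
Proof.
move=> f0_neq0 rec; case: drg => _ [_ [_ [[x _] _]]].
apply/eigenvalueP; exists (\row_j f (gdist e x (enum_val j))).
  apply/rowP => j; rewrite !mxE; under eq_bigr do rewrite !mxE.
  rewrite -(big_enum_val (fun t => f (gdist e x t) * (e t (enum_val j))%:R)).
  by rewrite sum_nbrs_intersection -rec ?gdist_le_diam // !mulr_natr.
apply/eqP => /rowP /(_ (enum_rank x)); rewrite !mxE enum_rankK gdistxx.
exact/eqP.
Qed.

End DistanceRegular.

Local Open Scope ring_scope.

Section PositiveRoot.
Variables (R : rcfType) (a k : R).
Hypothesis k_ge0 : 0 <= k.

Let s := Num.sqrt (a ^+ 2 + 4 * k).

Let s_ge0 : 0 <= s. Proof. exact: sqrtr_ge0. Qed.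

Let sqr_s : s ^+ 2 = a ^+ 2 + 4 * k.
Proof. by rewrite sqr_sqrtr //; apply: addr_ge0; rewrite ?sqr_ge0 ?mulr_ge0. Qed.

Let a_between : - s <= a <= s.
Proof. by rewrite -ler_norml -sqrtr_sqr ler_wsqrtr // lerDl mulr_ge0. Qed.

Lemma quadratic_factor x :
  x ^+ 2 - a * x - k = (x - (a + s) / 2) * (x - (a - s) / 2).
Proof.
have -> : k = (s ^+ 2 - a ^+ 2) / 4 by rewrite sqr_s; field.
by field.
Qed.

Lemma quadratic_root_ge0 : 0 <= (a + s) / 2.
Proof. by move: a_between => /andP[? _]; lra. Qed.

Lemma quadratic_le0 x : 0 <= x -> x <= (a + s) / 2 -> x ^+ 2 - a * x - k <= 0.
Proof.
move=> x_ge0 le_x_root; rewrite quadratic_factor.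
by move: a_between => /andP[_ ?]; apply: mulr_le0_ge0; lra.
Qed.

End PositiveRoot.

Definition drg3_quad (R : nzRingType) (k b1 x : R) := x ^+ 2 - (k - b1 - 1) * x - k.

Definition drg3_seq (R : fieldType) (k b1 b2 c2 x : R) (n : nat) : R :=
  match n with
  | 0 => 1
  | 1 => x / k
  | 2 => drg3_quad k b1 x / (k * b1)
  | 3 => ((x - (k - b2 - c2)) * drg3_quad k b1 x - b1 * c2 * x) / (k * b1 * b2)
  | _ => 0
  end.

(* k b1 b2 ((x - a3) u3 - c3 u2) for the standard sequence u = drg3_seq x of
   the intersection array {k, b1, b2; 1, c2, c3}, where a_i = k - b_i - c_i;
   drg3_quad is k b1 u2. *)
Definition drg3_quartic (R : nzRingType) (k b1 b2 c2 c3 x : R) :=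
  (x - (k - c3)) * ((x - (k - b2 - c2)) * drg3_quad k b1 x - b1 * c2 * x)
    - b2 * c3 * drg3_quad k b1 x.

Lemma drg3_seq_recurrence (R : fieldType) (bb cc : nat -> R) (x : R) :
  bb 0 != 0 -> bb 1 != 0 -> bb 2 != 0 -> bb 3 = 0 -> cc 0 = 0 -> cc 1 = 1 ->
  drg3_quartic (bb 0) (bb 1) (bb 2) (cc 2) (cc 3) x = 0 ->
  let u := drg3_seq (bb 0) (bb 1) (bb 2) (cc 2) x in
  forall i, (i <= 3)%N ->
    u i.+1 * bb i + u i.-1 * cc i + u i * (bb 0 - bb i - cc i) = x * u i.
Proof.
move=> b0_neq0 b1_neq0 b2_neq0 b3 c0 c1 quartic_x u.
case=> [|[|[|[|i]]]] //= _; rewrite /u /drg3_seq ?b3 ?c0 ?c1 /drg3_quad.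
- by field.
- by field; rewrite b0_neq0.
- by field; rewrite b0_neq0 b1_neq0.
apply/eqP; rewrite -subr_eq0; apply/eqP.
transitivity (- drg3_quartic (bb 0) (bb 1) (bb 2) (cc 2) (cc 3) x
                / (bb 0 * bb 1 * bb 2)).
  by rewrite /drg3_quartic /drg3_quad; field; rewrite b0_neq0 b1_neq0 b2_neq0.
by rewrite quartic_x oppr0 mul0r.
Qed.

Lemma drg3_quartic_root_eigenvalue (R : numFieldType) (T : finType) (e : rel T)
    (b c : nat -> nat) (x : R) :
  distance_regular e 3 b c ->
  drg3_quartic (b 0)%:R (b 1)%:R (b 2)%:R (c 2)%:R (c 3)%:R x = 0 ->
  eigenvalue (adjmx R e) x.
Proof.
move=> drg quartic_x.
have c0 : c 0 = 0%N by case: drg => _ [_ [_ [_ [_ []]]]].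
have [b0_gt0 b1_gt0 b2_gt0] : [/\ 0 < b 0, 0 < b 1 & 0 < b 2]%N.
  by split; apply: (intersection_b_gt0 drg).
apply: (eigenvalue_of_recurrence drg
  (f := drg3_seq (b 0)%:R (b 1)%:R (b 2)%:R (c 2)%:R x)); first exact: oner_neq0.
move=> i le_i3; rewrite (natr_inter_a drg) //.
apply: (drg3_seq_recurrence (bb := fun i => (b i)%:R) (cc := fun i => (c i)%:R))
  => //.
- by rewrite pnatr_eq0 -lt0n.
- by rewrite pnatr_eq0 -lt0n.
- by rewrite pnatr_eq0 -lt0n.
- by rewrite /= (intersection_bD drg).
- by rewrite /= c0.
- by rewrite /= (intersection_c1 drg).
Qed.

Definition drg3_cofactor (R : nzRingType) (k b1 b2 c2 c3 : R) : {poly R} :=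
  ('X - (k - b2 - c2 - c3)%:P) * ('X^2 - (k - b1 - 1) *: 'X - k%:P)
    + (c2 * c3)%:P + (c2 * (c3 - b1)) *: 'X.

Lemma drg3_quartic_factor (R : comNzRingType) (k b1 b2 c2 c3 x : R) :
  drg3_quartic k b1 b2 c2 c3 x = (x - k) * (drg3_cofactor k b1 b2 c2 c3).[x].
Proof. by rewrite /drg3_quartic /drg3_quad !hornerE; ring. Qed.

Lemma drg3_quartic_k (R : comNzRingType) (k b1 b2 c2 c3 : R) :
  drg3_quartic k b1 b2 c2 c3 k = 0.
Proof. by rewrite drg3_quartic_factor subrr mul0r. Qed.

Lemma drg3_cofactor_gt0 (R : realDomainType) (k b1 b2 c2 c3 : R) :
  0 < k -> 0 < b1 -> 0 < b2 -> 0 < c2 -> 0 < c3 ->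
  0 < (drg3_cofactor k b1 b2 c2 c3).[k].
Proof.
move=> k_gt0 b1_gt0 b2_gt0 c2_gt0 c3_gt0.
have -> : (drg3_cofactor k b1 b2 c2 c3).[k]
    = k * b1 * (b2 + c3) + c2 * c3 * (1 + k).
  by rewrite !hornerE; ring.
by rewrite addr_gt0 // !mulr_gt0 // addr_gt0.
Qed.

Lemma drg3_quartic_root_between (R : rcfType) (k b1 b2 c2 c3 th : R) :
  0 < k -> 0 < b1 -> 0 < b2 -> 0 < c2 -> 0 < c3 -> 0 <= k - c3 ->
  let a1 := k - b1 - 1 in
  th < (a1 + Num.sqrt (a1 ^+ 2 + 4 * k)) / 2 -> th < k - c3 ->
  exists xi, [/\ th < xi, xi < k & drg3_quartic k b1 b2 c2 c3 xi = 0].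
Proof.
move=> k_gt0 b1_gt0 b2_gt0 c2_gt0 c3_gt0 a3_ge0 a1.
set r := (a1 + _) / 2 => th_lt_r th_lt_a3.
have quad_r : drg3_quad k b1 r = 0.
  by rewrite /drg3_quad (quadratic_factor _ (ltW k_gt0)) subrr mul0r.
have r_ge0 : 0 <= r by exact: quadratic_root_ge0 (ltW k_gt0).
have quad_le0 (x : R) : 0 <= x -> x <= r -> drg3_quad k b1 x <= 0.
  exact: quadratic_le0 (ltW k_gt0) x.
clearbody r.
have [m [th_lt_m m_lt_k quartic_m_ge0]] :
    exists m : R, [/\ th < m, m < k & 0 <= drg3_quartic k b1 b2 c2 c3 m].
  have [le_r_a3 | lt_a3_r] := lerP r (k - c3).
    exists r; split; [done | lra |].
    rewrite /drg3_quartic quad_r !mulr0 subr0 sub0r mulrN -mulNr.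
    by rewrite mulr_ge0 ?oppr_ge0 ?subr_le0 // !mulr_ge0 // ltW.
  exists (k - c3); split; [done | lra |].
  rewrite /drg3_quartic subrr mul0r sub0r -mulrN.
  by rewrite mulr_ge0 ?oppr_ge0 ?quad_le0 ?mulr_ge0 // ltW.
have cofactor_m_le0 : (drg3_cofactor k b1 b2 c2 c3).[m] <= 0.
  rewrite leNgt; apply/negP => cofactor_m_gt0.
  move: quartic_m_ge0.
  by rewrite drg3_quartic_factor leNgt pmulr_llt0 // subr_lt0 m_lt_k.
have cofactor_k_gt0 := drg3_cofactor_gt0 k_gt0 b1_gt0 b2_gt0 c2_gt0 c3_gt0.
have sign_change : (drg3_cofactor k b1 b2 c2 c3).[m] <= 0
                   <= (drg3_cofactor k b1 b2 c2 c3).[k].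
  by rewrite cofactor_m_le0 ltW.
have [xi /andP[m_le_xi xi_le_k] /rootP cofactor_xi] :=
  poly_ivt (ltW m_lt_k) sign_change.
exists xi; split; first exact: lt_le_trans m_le_xi.
  rewrite lt_neqAle xi_le_k andbT; apply/eqP => xi_k.
  by move: cofactor_k_gt0; rewrite -{2}xi_k cofactor_xi ltxx.
by rewrite drg3_quartic_factor cofactor_xi mulr0.
Qed.

Theorem lemma6 (R : rcfType) (T : finType) (e : rel T) (b c : nat -> nat)
    (th1 : R) :
  distance_regular e 3 b c ->
  second_largest_eigenvalue (adjmx R e) th1 ->
  Num.min (((inter_a b c 1)%:R + Num.sqrt ((inter_a b c 1)%:R ^+ 2
              + 4 * (valency b)%:R)) / 2)
          (inter_a b c 3)%:R <= th1.
Proof.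
move=> drg [_ _ unique_above_th1].
have a1E : (inter_a b c 1)%:R = (b 0)%:R - (b 1)%:R - 1 :> R.
  by rewrite (natr_inter_a drg) // (intersection_c1 drg).
have a3E : (inter_a b c 3)%:R = (b 0)%:R - (c 3)%:R :> R.
  by rewrite (natr_inter_a drg) // (intersection_bD drg) subr0.
have a3_ge0 : 0 <= (b 0)%:R - (c 3)%:R :> R by rewrite -a3E ler0n.
rewrite leNgt lt_min a1E a3E /valency; apply/negP => /andP[th1_lt_root th1_lt_a3].
have b_gt0 i : (i < 3)%N -> 0 < (b i)%:R :> R.
  by rewrite ltr0n; apply: (intersection_b_gt0 drg).
have c_gt0 i : (0 < i <= 3)%N -> 0 < (c i)%:R :> R.
  by rewrite ltr0n; apply: (intersection_c_gt0 drg).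
have [xi [th1_lt_xi xi_lt_k /(drg3_quartic_root_eigenvalue drg) eig_xi]] :=
  drg3_quartic_root_between (b_gt0 0 isT) (b_gt0 1 isT) (b_gt0 2 isT)
    (c_gt0 2 isT) (c_gt0 3 isT) a3_ge0 th1_lt_root th1_lt_a3.
have eig_k := drg3_quartic_root_eigenvalue drg (drg3_quartic_k (R := R) _ _ _ _ _).
have := unique_above_th1 _ _ eig_xi eig_k th1_lt_xi (lt_trans th1_lt_xi xi_lt_k).
by move/eqP; rewrite lt_eqF.
Qed.
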